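(* Let $m\ge d\ge1$, $\lambda=d/m$, and let $p,q$ be polynomials of degree $d$ with nonnegative real roots, with bivariate extensions $p(x,y)=y^{m-d}p(xy)$, $q(x,y)=y^{m-d}q(xy)$. Then \[ [p\boxplus_{d,\lambda}q](x,y)=\frac{(m-d)!}{d!\,m!}\sum_{k=0}^d(\partial_x\partial_y)^{d-k}p(x,y)\cdot\big[(\partial_x\partial_y)^kq\big](0,1), \] and \[ (p\boxplus_{d,\lambda}q)(x)=\frac{(m-d)!}{d!\,m!}\sum_{k=0}^d\big[(\partial_x\partial_y)^{d-k}p\big](x,1)\cdot\big[(\partial_x\partial_y)^kq\big](0,1). \]
   Context: For $p=\sum_{i=0}^d(-1)^ia_ix^{d-i}$, $q=\sum_{i=0}^d(-1)^ib_ix^{d-i}$: $(p\boxplus_{d,\lambda}q)(x)=\sum_{k=0}^dx^{d-k}(-1)^k\sum_{i+j=k}\frac{(d-i)!(d-j)!}{d!(d-k)!}\frac{(m-i)!(m-j)!}{m!(m-k)!}a_ib_j$, and $[p\boxplus_{d,\lambda}q](x,y):=y^{m-d}(p\boxplus_{d,\lambda}q)(xy)$. *)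

From mathcomp Require Import all_boot all_order all_algebra.
Set Implicit Arguments. Unset Strict Implicit. Unset Printing Implicit Defensive.
Import Order.TTheory GRing.Theory Num.Theory.
Local Open Scope ring_scope.

(* Bivariate polynomials are represented as {poly {poly R}}:
   the OUTER variable is y, the INNER variable is x,
   i.e. P = \sum_l c_l(x) y^l with c_l : {poly R}. *)

Section Defs.
Variable R : fieldType.

(* a_i = coefficient such that p = \sum_i (-1)^i a_i x^(d-i) *)
Definition scoef (d : nat) (p : {poly R}) (i : nat) : R :=
  (-1) ^+ i * p`_(d - i).

Definition boxplus (d m : nat) (p q : {poly R}) : {poly R} :=
  \sum_(k < d.+1)
    ((-1) ^+ k *
      \sum_(i < k.+1)
        ((((d - i)`! * (d - (k - i))`!)%:R / ((d`! * (d - k)`!)%:R)) *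
         (((m - i)`! * (m - (k - i))`!)%:R / ((m`! * (m - k)`!)%:R)) *
         scoef d p i * scoef d q (k - i))) *: 'X^(d - k).

Definition biv (d m : nat) (p : {poly R}) : {poly {poly R}} :=
  \sum_(j < size p) (p`_j *: 'X^j)%:P * 'X^(j + (m - d)).

Definition dX (P : {poly {poly R}}) : {poly {poly R}} := map_poly (@deriv R) P.
Definition dY (P : {poly {poly R}}) : {poly {poly R}} := deriv P.
Definition dXdY (P : {poly {poly R}}) : {poly {poly R}} := dX (dY P).

Definition evalXY (P : {poly {poly R}}) (x0 y0 : R) : R := (P.[y0%:P]).[x0].
Definition evalY (P : {poly {poly R}}) (y0 : R) : {poly R} := P.[y0%:P].

End Defs.

Definition deg_nonneg_roots (R : realFieldType) (d : nat) (p : {poly R}) : Prop :=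
  size p = d.+1 /\
  exists rs : seq R, all (fun r => 0 <= r) rs /\
    p = lead_coef p *: \prod_(r <- rs) ('X - r%:P).

From mathcomp Require Import all_boot all_order all_algebra.
From mathcomp Require Import ring zify.
Import Order.TTheory GRing.Theory Num.Theory.

(* The bivariate extension p(x,y) = y^(m-d) p(xy) only has monomials x^s y^(s+m-d), and
   d/dx d/dy sends x^a y^b to a b x^(a-1) y^(b-1), which preserves this shape; so
   (d/dx d/dy)^n p(x,y) has coefficient p_(s+n) (s+m-d+n)^_n (s+n)^_n at x^s y^(s+m-d),
   and [(d/dx d/dy)^k q](0,1) = q_k (m-d+k)^_k k!.  Comparing coefficients at
   x^s y^(s+m-d) reduces the bivariate identity to a factorial identity for the weights
   of boxplus, whose signs (-1)^i (-1)^(k-i) cancel against (-1)^k.  The univariate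
   identity is the bivariate one at y = 1. *)

Set Implicit Arguments.
Unset Strict Implicit.
Unset Printing Implicit Defensive.

Local Open Scope ring_scope.

Section Bivariate.
Variable R : fieldType.
Implicit Types (P : {poly {poly R}}) (p q : {poly R}).

Lemma coef_dXdY P l s : (dXdY P)`_l`_s = P`_l.+1`_s.+1 *+ l.+1 *+ s.+1.
Proof. by rewrite coef_map_id0 ?deriv0 // !coef_deriv coefMn. Qed.

Lemma coef_iter_dXdY n P l s :
  (iter n (@dXdY R) P)`_l`_s = P`_(l + n)`_(s + n) *+ ((l + n) ^_ n * (s + n) ^_ n).
Proof.
elim: n P l s => [|n IHn] P l s; first by rewrite !addn0 !ffactn0.
by rewrite iterSr IHn coef_dXdY !addnS !ffactSS -!mulrnA mulnACA !mulnA.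
Qed.

Lemma coef_biv d m p l s :
  (biv d m p)`_l`_s = if l == (s + (m - d))%N then p`_s else 0.
Proof.
rewrite /biv !coef_sum.
under eq_bigr => j _ do rewrite coefCM coefXn mulr_natr coefMn coefZ coefXn.
case: (ltnP s (size p)) => [lt_s_p | le_p_s]; last first.
  rewrite nth_default // if_same; apply: big1 => j _.
  by rewrite (gtn_eqF (leq_trans (ltn_ord j) le_p_s)) mulr0 mul0rn.
rewrite (bigD1 (Ordinal lt_s_p)) //= big1 ?addr0 => [|j /negbTE neq_js].
  by rewrite eqxx mulr1 eq_sym; case: eqP.
by rewrite eq_sym (neq_js : (j == s :> nat) = false) mulr0 mul0rn.
Qed.

Lemma evalY_biv d m p : evalY (biv d m p) 1 = p.
Proof.
rewrite /evalY horner_sum.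
under eq_bigr => j _ do rewrite hornerCM hornerXn expr1n mulr1.
by rewrite -poly_def coefK.
Qed.

Lemma coef_iter_dXdY_biv n d m p l s :
  (iter n (@dXdY R) (biv d m p))`_l`_s =
  if l == (s + (m - d))%N
  then p`_(s + n) *+ ((s + (m - d) + n) ^_ n * (s + n) ^_ n) else 0.
Proof.
rewrite coef_iter_dXdY coef_biv addnAC eqn_add2r.
by case: eqP => [->|]; rewrite ?mul0rn.
Qed.

Lemma evalXY_iter_dXdY_biv n d m p :
  evalXY (iter n (@dXdY R) (biv d m p)) 0 1 = p`_n *+ ((m - d + n) ^_ n * n`!).
Proof.
set P := iter n _ _.
rewrite /evalXY horner_coef0 (@horner_coef_wide _ (size P + (m - d).+1)) ?leq_addr //.
rewrite coef_sum.
under eq_bigr => i _ do rewrite -polyC_exp expr1n coefMC mulr1 coef_iter_dXdY_biv.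
rewrite -big_mkcond !add0n (big_ord1_eq _ (fun=> p`_n *+ _)) ltn_addl //.
by rewrite ffactnn.
Qed.

Definition boxplus_weight d m k i : R :=
  ((d - i)`! * (d - (k - i))`!)%:R / (d`! * (d - k)`!)%:R *
  (((m - i)`! * (m - (k - i))`!)%:R / (m`! * (m - k)`!)%:R).
Arguments boxplus_weight : simpl never.

Lemma boxplusE d m p q : boxplus d m p q =
  \sum_(k < d.+1) ((-1) ^+ k *
    \sum_(i < k.+1) boxplus_weight d m k i * scoef d p i * scoef d q (k - i)) *: 'X^(d - k).
Proof. by []. Qed.

Lemma coef_boxplus d m p q s : (s <= d)%N ->
  (boxplus d m p q)`_s =
    \sum_(i < (d - s).+1) boxplus_weight d m (d - s) i * p`_(d - i) * q`_(s + i).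
Proof.
move=> le_sd; have lt_ds_d : (d - s < d.+1)%N by rewrite ltnS leq_subr.
rewrite boxplusE coef_sum (bigD1 (Ordinal lt_ds_d)) //= coefZ coefXn.
rewrite (_ : s == d - (d - s))%N; last by rewrite subKn.
rewrite mulr1 [X in _ + X]big1 ?addr0 => [|k neq_k]; last first.
  rewrite coefZ coefXn; case: eqP => [eq_s|]; last by rewrite mulr0.
  by case/eqP: neq_k; apply: val_inj; rewrite /= eq_s subKn // -ltnS.
rewrite mulr_sumr; apply: eq_bigr => i _; have le_i := ltn_ord i; rewrite ltnS in le_i.
move: (boxplus_weight _ _ _ _) => W.
rewrite /scoef -mulrA mulrACA -exprD subnKC //.
rewrite (mulrCA _ W) signrMK mulrA.
by rewrite (_ : d - (d - s - i) = s + i)%N; last lia.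
Qed.

Lemma coef_boxplus_gt d m p q s : (d < s)%N -> (boxplus d m p q)`_s = 0.
Proof.
move=> lt_ds; rewrite coef_sum big1 // => k _.
by rewrite coefZ coefXn gtn_eqF ?mulr0 // (leq_ltn_trans (leq_subr _ _)).
Qed.

End Bivariate.

Section CharZero.
Variable R : numFieldType.
Implicit Types p q : {poly R}.

Lemma natr_fact_neq0 n : (n`!%:R : R) != 0.
Proof. by rewrite pnatr_eq0 -lt0n fact_gt0. Qed.

Lemma natr_ffact_addE n k : ((n + k) ^_ k)%:R = (n + k)`!%:R / n`!%:R :> R.
Proof.
by rewrite -[in RHS](ffact_fact (leq_addl n k)) addnK natrM mulfK ?natr_fact_neq0.
Qed.

Lemma boxplus_weightE s n e i : (i <= n)%N ->
  boxplus_weight R (s + n) (s + n + e) n i =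
  e`!%:R / ((s + n)`! * (s + n + e)`!)%:R *
  ((s + e + (n - i)) ^_ (n - i) * (s + (n - i)) ^_ (n - i) *
   ((e + (s + i)) ^_ (s + i) * (s + i)`!))%:R.
Proof.
move=> /subnKC <-; move: (n - i)%N => j.
rewrite /boxplus_weight addKn.
have -> : (s + (i + j) - i = s + j)%N by lia.
have -> : (s + (i + j) - j = s + i)%N by lia.
have -> : (s + (i + j) - (i + j) = s)%N by lia.
have -> : (s + (i + j) + e - i = s + e + j)%N by lia.
have -> : (s + (i + j) + e - j = e + (s + i))%N by lia.
have -> : (s + (i + j) + e - (i + j) = s + e)%N by lia.
rewrite !natrM !natr_ffact_addE.
by field; rewrite !natr_fact_neq0.
Qed.

Lemma coef_boxplus_ffact d m p q s : (size p <= d.+1)%N -> (d <= m)%N ->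
  (boxplus d m p q)`_s = (m - d)`!%:R / (d`! * m`!)%:R *
    \sum_(k < d.+1) p`_(s + (d - k)) *+
                     ((s + (m - d) + (d - k)) ^_ (d - k) * (s + (d - k)) ^_ (d - k)) *
                   (q`_k *+ ((m - d + k) ^_ k * k`!)).
Proof.
move=> size_p le_dm.
have [e def_m] : exists e, m = (d + e)%N by exists (m - d)%N; rewrite subnKC.
subst m; rewrite addKn.
case: (leqP s d) => [le_sd | lt_ds]; last first.
  rewrite coef_boxplus_gt // big1 ?mulr0 // => k _.
  rewrite nth_default ?mul0rn ?mul0r // (leq_trans size_p) //.
  exact: leq_trans lt_ds (leq_addr _ _).
have [n def_d] : exists n, d = (s + n)%N by exists (d - s)%N; rewrite subnKC.
subst d; rewrite coef_boxplus ?leq_addr // addKn -addnS big_split_ord /=.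
rewrite [X in _ * (X + _)]big1 ?add0r => [|k _]; last first.
  rewrite nth_default ?mul0rn ?mul0r // (leq_trans size_p) //.
  have := ltn_ord k; lia.
rewrite !mulr_sumr; apply: eq_bigr => i _; have le_i := ltn_ord i; rewrite ltnS in le_i.
rewrite subnDl -addnBA // boxplus_weightE // -(mulr_natr p`__) -(mulr_natr q`__) !natrM.
ring.
Qed.

Lemma biv_boxplus d m p q : (size p <= d.+1)%N -> (d <= m)%N ->
  biv d m (boxplus d m p q) =
    ((m - d)`!%:R / (d`! * m`!)%:R : R)%:P%:P *
      \sum_(k < d.+1) iter (d - k) (@dXdY R) (biv d m p) *
                      (evalXY (iter k (@dXdY R) (biv d m q)) 0 1)%:P%:P.
Proof.
move=> size_p le_dm; apply/polyP => l; apply/polyP => s.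
rewrite coef_biv !coefCM [in RHS]coef_sum [in RHS]coef_sum.
under eq_bigr => k _ do rewrite !coefMC coef_iter_dXdY_biv evalXY_iter_dXdY_biv.
case: eqP => _; first exact: coef_boxplus_ffact.
by rewrite big1 ?mulr0 // => k _; rewrite mul0r.
Qed.

End CharZero.

Theorem mainTheorem13 (R : realFieldType) (d m : nat) (p q : {poly R}) :
  (1 <= d)%N -> (d <= m)%N ->
  deg_nonneg_roots d p -> deg_nonneg_roots d q ->
  biv d m (boxplus d m p q) =
    ((m - d)`!%:R / (d`! * m`!)%:R : R)%:P%:P *
      \sum_(k < d.+1) iter (d - k) (@dXdY R) (biv d m p) *
                      (evalXY (iter k (@dXdY R) (biv d m q)) 0 1)%:P%:P
  /\
  boxplus d m p q =
    ((m - d)`!%:R / (d`! * m`!)%:R : R)%:P *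
      \sum_(k < d.+1) evalY (iter (d - k) (@dXdY R) (biv d m p)) 1 *
                      (evalXY (iter k (@dXdY R) (biv d m q)) 0 1)%:P.
Proof.
move=> _ le_dm [size_p _] _.
have biv_eq := biv_boxplus q (eq_leq size_p) le_dm.
split=> //.
have := congr1 (fun P => evalY P 1) biv_eq; rewrite evalY_biv => ->.
rewrite /evalY hornerM hornerC horner_sum; congr (_ * _).
by apply: eq_bigr => k _; rewrite hornerM hornerC.
Qed.
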